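(* For any $1\le\alpha\le\mathcal N$ and $g\in\mathbb C[x_1^{\pm1},\dots,x_\alpha^{\pm1}]^{S(\alpha)}$, \[\iota\big(\Phi(\widetilde E_\alpha(g))\big)=\theta^{\alpha(\mathcal N-\alpha)}\,\mathcal A_\alpha(P),\qquad P(x_1,\dots,x_\alpha)=g(\mathfrak q^{-1/2}x_1^{-1},\dots,\mathfrak q^{-1/2}x_\alpha^{-1}).\]
   Context: Let $\mathfrak q,\mathfrak t\in\mathbb C^\times$ with $q_1=\mathfrak q$, $q_2=1/\mathfrak t$, $q_3=\mathfrak t/\mathfrak q$ not roots of unity; fix square roots $\theta=\mathfrak t^{1/2}$, $\mathfrak q^{1/2}$, $q_2^{1/2}$. Fix $\mathcal N\ge1$. $\widetilde{\mathcal A}$ is the $\mathbb C$-algebra generated by $D_r^{\pm1},w_r^{\pm1}$ ($1\le r\le\mathcal N$), all commuting except $D_rw_s=q_1^{\delta_{rs}}w_sD_r$, localized at $w_r-q_1^mw_s$ ($r\ne s$). $\mathcal B$ is the $\mathbb C$-algebra generated by $x_i^{\pm1},\Gamma_i^{\pm1}$ ($1\le i\le\mathcal N$), all commuting except $\Gamma_ix_i=\mathfrak q x_i\Gamma_i$, localized at $x_i-\mathfrak q^mx_j$ ($i\ne j$); $\iota:\widetilde{\mathcal A}\to\mathcal B$ is the isomorphism $w_i^{\pm1}\mapsto x_i^{\mp1}\mathfrak q^{\mp1/2}$, $D_i^{\pm1}\mapsto\Gamma_i^{\mp1}$. Let $\zeta(z/w)=\frac{\prod_{i=1}^3(z-q_i^{-1}w)}{(z-w)^3}$,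 $\varphi(z/w)=\frac{(q_1^{1/2}z-q_1^{-1/2}w)(q_2^{1/2}z-q_2^{-1/2}w)}{(z-w)^2}$. $\mathbb S=\bigoplus_k\mathbb S_k$, $\mathbb S_k$ the space of $f/\prod_{r\ne s}(x_r-x_s)$ with $f$ a symmetric complex Laurent polynomial in $x_1,\dots,x_k$, with shuffle product $F\star G=\frac{1}{k!\ell!}\mathrm{Sym}(F(x_1..x_k)G(x_{k+1}..x_{k+\ell})\prod_{r\le k<r'}\zeta(x_r/x_{r'}))$. With $Y_r(z)=\frac{-1}{1-q_1^{-1}}\prod_{s\ne r}\frac{z-w_sq_2^{-1}}{z-w_s}$, the map $\Phi:\mathbb S\to\widetilde{\mathcal A}$ is defined on $E\in\mathbb S_k$ by $\Phi(E)=\sum_{m_1+\dots+m_{\mathcal N}=k}\{\prod_r\prod_{p\le m_r}Y_r(w_rq_1^{-(p-1)})\cdot E(\{w_rq_1^{-(p-1)}\}_r^{p\le m_r})\prod_r\prod_{p_1<p_2\le m_r}\zeta^{-1}(\frac{w_rq_1^{-(p_1-1)}}{w_rq_1^{-(p_2-1)}})\prod_{r_1\ne r_2}\prod_{p_1\le m_{r_1},p_2\le m_{r_2}}\varphi^{-1}(\frac{w_{r_1}q_1^{-(p_1-1)}}{w_{r_2}q_1^{-(p_2-1)}})\prod_rD_r^{-m_r}\}$ ($m_r\in\mathbb N$). $\widetilde E_\alpha(g)=q_3^{\frac{\alpha-\alpha^2}2}(q_1^{-1}-1)^\alpha\frac{\prod_{1\le r\ne s\le\alpha}(x_r-q_1^{-1}x_s)\,g(x_1,\dots,x_\alpha)}{\prod_{1\le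 r\ne s\le\alpha}(x_r-x_s)}\in\mathbb S_\alpha$. For a symmetric Laurent polynomial $P$ in $\alpha$ variables, the generalized Macdonald operator is $\mathcal A_\alpha(P)=\frac{1}{\alpha!(\mathcal N-\alpha)!}\mathrm{Sym}_{x_1,\dots,x_{\mathcal N}}\Big(P(x_1,\dots,x_\alpha)\prod_{1\le i\le\alpha<j\le\mathcal N}\frac{\theta x_i-\theta^{-1}x_j}{x_i-x_j}\Gamma_1\cdots\Gamma_\alpha\Big)\in\mathcal B$, where Sym permutes the indices $1,\dots,\mathcal N$ of the $x_i$ and $\Gamma_i$ simultaneously. *)

From HB Require Import structures.
From mathcomp Require Import all_boot all_order all_algebra all_fingroup.
From mathcomp Require Import mpoly.
Set Implicit Arguments. Unset Strict Implicit. Unset Printing Implicit Defensive.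
Import Order.TTheory GRing.Theory Num.Theory.
Local Open Scope ring_scope.

(*  * a rational function in N variables is represented by a total function *)
(*    ('I_N -> C) -> C computed by field operations; two of them are equal  *)
(*    as rational functions iff they agree outside the zero set of some     *)
(*    nonzero polynomial ([rat_eq]);                                         *)
(*  * an element of A~ (resp. B) is written in the normal form              *)
(*    sum_e f_e(w) D^e  (resp. sum_e f_e(x) Gamma^e), coefficients on the    *)
(*    left, e in Z^N; it is represented by the family e |-> f_e ([opalg]).   *)

Section Defs.
Variable C : numClosedFieldType.

Definition ratfun (N : nat) := ('I_N -> C) -> C.

Definition rat_eq (N : nat) (f g : ratfun N) : Prop :=
  exists Q : {mpoly C[N]}, Q != 0 /\ forall x : 'I_N -> C, Q.@[x] != 0 -> f x = g x.

Definition opalg (N : nat) := ('I_N -> int) -> ratfun N.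

Definition op_eq (N : nat) (A B : opalg N) : Prop := forall e, rat_eq (A e) (B e).

Definition opscale (N : nat) (c : C) (A : opalg N) : opalg N := fun e x => c * A e x.

Variables (q t : C).
Definition q1 : C := q.
Definition q2 : C := t^-1.
Definition q3 : C := t / q.

Variables (qh q2h theta : C). (* q^{1/2} = q1^{1/2}, q2^{1/2}, theta = t^{1/2} *)

(* zeta(z/w) and phi(z/w) *)
Definition zeta (z w : C) : C :=
  (z - q1^-1 * w) * (z - q2^-1 * w) * (z - q3^-1 * w) / (z - w) ^+ 3.
Definition phi (z w : C) : C :=
  (qh * z - qh^-1 * w) * (q2h * z - q2h^-1 * w) / (z - w) ^+ 2.

Definition Yr (N : nat) (w : 'I_N -> C) (r : 'I_N) (z : C) : C :=
  - (1 - q1^-1)^-1 * \prod_(s < N | s != r) ((z - w s * q2^-1) / (z - w s)).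

(* the points {w_r q1^{-(p-1)}}_r^{p <= m_r} (here p runs from 0) *)
Definition Phi_pts (N : nat) (m : 'I_N -> nat) (w : 'I_N -> C) : seq C :=
  flatten [seq [seq w r * q1 ^- p | p <- iota 0 (m r)] | r <- enum 'I_N].

(* the coefficient of D^{-m} in Phi(E) *)
Definition Phi_coef (N : nat) (E : seq C -> C) (m : 'I_N -> nat) (w : 'I_N -> C) : C :=
  (\prod_(r < N) \prod_(p < m r) Yr w r (w r * q1 ^- p)) *
  E (Phi_pts m w) *
  (\prod_(r < N) \prod_(p1 < m r) \prod_(p2 < m r | (p1 < p2)%N)
      (zeta (w r * q1 ^- p1) (w r * q1 ^- p2))^-1) *
  (\prod_(r1 < N) \prod_(r2 < N | r1 != r2) \prod_(p1 < m r1) \prod_(p2 < m r2)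
      (phi (w r1 * q1 ^- p1) (w r2 * q1 ^- p2))^-1).

(* Phi : S_k -> A~, for E in S_k given as a function of its k arguments
   (a symmetric function, so it is evaluated on a list of the k points) *)
Definition Phi (N k : nat) (E : seq C -> C) : opalg N :=
  fun e w =>
    if [forall r, e r <= 0] && (\sum_(r < N) absz (e r) == k)%N
    then Phi_coef E (fun r => absz (e r)) w else 0.

(* iota : A~ -> B,  w_r |-> x_r^{-1} q^{-1/2},  D_r^{-1} |-> Gamma_r *)
Definition iotaAB (N : nat) (A : opalg N) : opalg N :=
  fun e x => A (fun r => - e r) (fun r => (x r)^-1 * qh^-1).

(* symmetric Laurent polynomial g = p / (x_1 ... x_a)^d *)
Definition laurent_eval (a : nat) (p : {mpoly C[a]}) (d : nat) (y : 'I_a -> C) : C :=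
  p.@[y] / (\prod_(i < a) y i) ^+ d.

Definition Etilde (a : nat) (p : {mpoly C[a]}) (d : nat) (xs : seq C) : C :=
  let x := fun i : 'I_a => nth 0 xs i in
  q3 ^- ((a * (a - 1)) %/ 2) * (q1^-1 - 1) ^+ a *
  (\prod_(r < a) \prod_(s < a | s != r) (x r - q1^-1 * x s)) * laurent_eval p d x /
  (\prod_(r < a) \prod_(s < a | s != r) (x r - x s)).

Definition Pg (a : nat) (p : {mpoly C[a]}) (d : nat) (y : 'I_a -> C) : C :=
  laurent_eval p d (fun i => qh^-1 * (y i)^-1).

Definition Amac (N a : nat) (P : ('I_a -> C) -> C) : opalg N :=
  fun e x =>
    ((a`!)%:R * ((N - a)`!)%:R)^-1 *
    \sum_(s : 'S_N)
      (if [forall j, e j == (if ((s^-1)%g j < a)%N then 1%Z else 0%Z)]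
       then P (fun i : 'I_a => nth 0 [seq x (s j) | j <- enum 'I_N] i) *
            \prod_(i < N | (i < a)%N) \prod_(j < N | (a <= j)%N)
              ((theta * x (s i) - theta^-1 * x (s j)) / (x (s i) - x (s j)))
       else 0).

End Defs.

From mathcomp Require Import all_boot all_algebra all_fingroup.
From mathcomp Require Import ring mpoly zify.
Import GRing.Theory Num.Theory.
Set Implicit Arguments. Unset Strict Implicit. Unset Printing Implicit Defensive.

(* Compare the coefficients of Gamma^e at a point x off the zero set of
   [nondegenerate_mpoly], where no denominator vanishes.  Phi(E~_alpha(g)) only
   has monomials D^-m with |m| = alpha.  If some m_r >= 2, the evaluation points
   contain both w_r and w_r q1^-1, and the factor (x_r - q1^-1 x_s) of E~_alpha
   vanishes; so only m = 1_S with |S| = alpha survives, as on the Macdonald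
   side, where the alpha!(N-alpha)! permutations s with s({1..alpha}) = S all
   give the same term.  For such S the Y-factors between S and its complement
   give theta^(alpha(N-alpha)) times the Macdonald cross-ratios, each ordered
   pair inside S contributes the constant q^(1/2) q2^(1/2) t / q, whose square
   is q3 = t/q and cancels the q3-power of E~_alpha, and the prefactors
   -(1 - q1^-1)^-1 and q1^-1 - 1 cancel. *)

Definition perm_head (N a : nat) (s : 'S_N) : {set 'I_N} := [set j | (s^-1)%g j < a].

Section PermHead.
Variables (N a : nat).
Implicit Types (s : 'S_N) (S : {set 'I_N}).

Lemma card_perm_head s : a <= N -> #|perm_head a s| = a.
Proof.
move=> leq_aN; rewrite -sum1_card (eq_bigl (fun j => (s^-1)%g j < a)) => [|j]; last by rewrite inE.
rewrite (reindex_inj (@perm_inj _ s)) (eq_bigl (fun i : 'I_N => i < a)) => [|i]; last first.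
  by rewrite permK.
by rewrite -(big_ord_widen_cond _ xpredT (fun _ => 1)) // sum1_card card_ord.
Qed.

Lemma perm_headP S : #|S| = a -> exists s, perm_head a s = S.
Proof.
move=> cardS; pose l := enum S ++ enum (~: S).
have size_l : size l = N by rewrite size_cat -!cardE cardsC card_ord.
have mem_l j : j \in l by rewrite mem_cat !mem_enum inE orbN.
have index_lt j : index j l < N by rewrite -[X in _ < X]size_l index_mem.
have index_inj : injective (fun j => Ordinal (index_lt j)).
  move=> j k /(congr1 val) /= ejk.
  by rewrite -(nth_index j (mem_l j)) ejk nth_index.
exists (perm index_inj)^-1%g; apply/setP => j; rewrite inE invgK permE /= index_cat mem_enum.
case: ifPn => [jS|jNS]; first by rewrite -cardS cardE index_mem mem_enum.
by rewrite -cardE cardS ltnNge leq_addr.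
Qed.

Lemma perm_head_mulg s s0 s1 :
  perm_head a s = perm_head a s0 -> perm_head a (s * (s0^-1 * s1))%g = perm_head a s1.
Proof.
move=> es; apply/setP => j; rewrite !inE !invMg !permM invgK.
have := congr1 (fun X : {set 'I_N} => s0 ((s1^-1)%g j) \in X) es; rewrite /= !inE => ->.
by rewrite permK.
Qed.

Lemma card_perm_head_fiber_le S0 S1 : #|S0| = a -> #|S1| = a ->
  #|[set s | perm_head a s == S0]| <= #|[set s | perm_head a s == S1]|.
Proof.
move=> /perm_headP[s0 <-] /perm_headP[s1 <-].
rewrite -(card_imset _ (mulIg (s0^-1 * s1)%g)); apply/subset_leq_card/subsetP => y.
by case/imsetP=> s; rewrite !inE => /eqP es ->; rewrite perm_head_mulg.
Qed.

Lemma card_perm_head_fiber S : a <= N -> #|S| = a ->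
  #|[set s | perm_head a s == S]| = (a`! * (N - a)`!)%N.
Proof.
move=> leq_aN cardS; pose fiber S' := #|[set s | perm_head a s == S']|.
have fiberE S' : #|S'| = a -> fiber S' = fiber S.
  by move=> cardS'; apply/eqP; rewrite eqn_leq !card_perm_head_fiber_le.
have sum_fiber : \sum_(S' in [set S' : {set 'I_N} | #|S'| == a]) fiber S' = N`!.
  rewrite -card_Sn -sum1_card.
  rewrite (partition_big (perm_head a) (mem [set S' : {set 'I_N} | #|S'| == a])) /=.
    by apply: eq_bigr => S' _; rewrite /fiber -sum1_card; apply: eq_bigl => s; rewrite inE.
  by move=> s _; rewrite inE card_perm_head.
have binN : 0 < 'C(N, a) by rewrite bin_gt0.
apply/eqP; rewrite -(eqn_pmul2l binN) bin_fact // -sum_fiber.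
rewrite (eq_bigr (fun _ => fiber S)) => [|S']; last by rewrite inE => /eqP /fiberE.
by rewrite sum_nat_const card_draws card_ord mulnC.
Qed.

End PermHead.

Local Open Scope ring_scope.

Section OffDiagonal.
Variables (R : comPzRingType) (a : nat).

Lemma prod_offdiag_perm (F : 'I_a -> 'I_a -> R) (s : 'S_a) :
  \prod_(i < a) \prod_(j < a | j != i) F (s i) (s j) =
  \prod_(i < a) \prod_(j < a | j != i) F i j.
Proof.
rewrite [RHS](reindex_inj (@perm_inj _ s)); apply: eq_bigr => i _.
by rewrite [RHS](reindex_inj (@perm_inj _ s)); apply: eq_bigl => j; rewrite (inj_eq perm_inj).
Qed.

Lemma prod_offdiag_pairs (F : 'I_a -> 'I_a -> R) (c : R) :
  (forall i j, i != j -> F i j * F j i = c) ->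
  \prod_(i < a) \prod_(j < a | j != i) F i j = c ^+ (a * (a - 1) %/ 2).
Proof.
move=> FFc.
have splitE i : \prod_(j < a | j != i) F i j =
    \prod_(j < a | (j < i)%N) F i j * \prod_(j < a | (i < j)%N) F i j.
  rewrite (bigID (fun j : 'I_a => (j < i)%N)) /=.
  by congr (_ * _); apply: eq_bigl => j; rewrite -val_eqE /=; case: ltngtP.
rewrite (eq_bigr _ (fun i _ => splitE i)) big_split /=.
rewrite [X in _ * X](exchange_big_dep xpredT) //= -big_split /=.
rewrite (eq_bigr (fun i : 'I_a => c ^+ i)) => [|i _]; last first.
  rewrite -big_split /= (eq_bigr (fun=> c)) => [|j ltji]; last first.
    by rewrite FFc // -val_eqE /= gtn_eqF.
  by rewrite -(big_ord_widen _ (fun=> c)) ?prodr_const ?card_ord // ltnW.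
by rewrite prodrXr -(big_mkord xpredT (fun i => i)) bin2_sum bin2 subn1 divn2.
Qed.

End OffDiagonal.

Section FactorIdentities.
Variables (F : fieldType) (qh : F) (X Y : F).
Hypotheses (qh_neq0 : qh != 0) (X_neq0 : X != 0) (Y_neq0 : Y != 0) (XY_neq0 : X - Y != 0).

Lemma cross_factorE (t theta : F) : theta != 0 -> theta ^+ 2 = t ->
  let z := X^-1 * qh^-1 in let y := Y^-1 * qh^-1 in
  (z - y * (t^-1)^-1) / (z - y) = theta * ((theta * X - theta^-1 * Y) / (X - Y)).
Proof.
move=> theta_neq0 <- z y; rewrite /z /y.
have YX_neq0 : Y - X != 0 by rewrite -opprB oppr_eq0.
by field; rewrite mulN1r XY_neq0 theta_neq0 qh_neq0 Y_neq0 X_neq0 YX_neq0 oner_eq0.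
Qed.

Lemma pair_factorE (q t q2h : F) : q2h != 0 -> qh ^+ 2 = q -> q2h ^+ 2 = t^-1 ->
  X - q * Y != 0 -> X - t^-1 * Y != 0 ->
  let z := X^-1 * qh^-1 in let y := Y^-1 * qh^-1 in
  let phi z y := (qh * z - qh^-1 * y) * (q2h * z - q2h^-1 * y) / (z - y) ^+ 2 in
  (z - y * (t^-1)^-1) / (z - y) * ((z - q^-1 * y) / (z - y)) * (phi z y)^-1 =
  qh * q2h * t / q.
Proof.
move=> q2h_neq0 <- q2hE; have -> : t = (q2h ^+ 2)^-1 by rewrite q2hE invrK.
rewrite invrK => Xq_neq0 Xt_neq0 z y phi; rewrite /phi /z /y.
have YX_neq0 : Y + -1 * X != 0 by rewrite mulN1r -opprB oppr_eq0.
have Xq'_neq0 : qh * (Y * qh) + -1 * X != 0.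
  by rewrite mulN1r -oppr_eq0 opprB mulrCA -expr2 mulrC.
have Xt'_neq0 : q2h * (q2h * Y) + -1 * X != 0.
  by rewrite mulN1r -oppr_eq0 opprB mulrA -expr2.
by field; rewrite qh_neq0 q2h_neq0 Y_neq0 X_neq0 YX_neq0 Xq'_neq0 Xt'_neq0.
Qed.

End FactorIdentities.

Lemma pair_constant_sqr (F : fieldType) (q t qh q2h : F) : qh != 0 -> q2h != 0 ->
  qh ^+ 2 = q -> q2h ^+ 2 = t^-1 -> qh * q2h * t / q * (qh * q2h * t / q) = t / q.
Proof.
move=> qh_neq0 q2h_neq0 <- q2hE; have -> : t = (q2h ^+ 2)^-1 by rewrite q2hE invrK.
by field; rewrite qh_neq0 q2h_neq0.
Qed.

Lemma perm_of_image (m n : nat) (g1 g2 : 'I_n -> 'I_m) :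
  injective g1 -> (forall i, exists j, g2 j = g1 i) ->
  exists s : 'S_n, forall i, g1 i = g2 (s i).
Proof.
move=> g1_inj g2_onto; pose f i := odflt i [pick j | g2 j == g1 i].
have fK i : g2 (f i) = g1 i.
  rewrite /f; case: pickP => [j /eqP //|none].
  by have [j ej] := g2_onto i; move: (none j); rewrite ej eqxx.
have f_inj : injective f by move=> i i' efi; apply: g1_inj; rewrite -!fK efi.
by exists (perm f_inj) => i; rewrite permE fK.
Qed.

Section MpolyFacts.
Variables (R : comNzRingType) (n : nat).
Implicit Types (p : {mpoly R[n]}) (v : 'I_n -> R).

Lemma meval_msym p (s : 'S_n) v : (msym s p).@[v] = p.@[fun i => v (s i)].
Proof.
rewrite [in LHS](mpolyE p) [in RHS](mpolyE p) (raddf_sum (msym s)) !raddf_sum.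
apply: eq_bigr => m _ /=; rewrite msymZ !mevalZ msymX !mevalX; congr (_ * _).
by rewrite (reindex_inj (@perm_inj _ s)); apply: eq_bigr => i _; rewrite mnmE permK.
Qed.

Lemma meval_perm_sym p (s : 'S_n) v :
  p \is symmetric -> p.@[fun i => v (s i)] = p.@[v].
Proof. by move=> /issymP p_sym; rewrite -meval_msym p_sym. Qed.

Lemma mpolyX_neq0 (i : 'I_n) : ('X_i : {mpoly R[n]}) != 0.
Proof.
apply/eqP => /(congr1 (mcoeff U_(i))); rewrite mcoeffXU eqxx mcoeff0.
by move/eqP; rewrite oner_eq0.
Qed.

Lemma mpolyX_subZ_neq0 (i j : 'I_n) (c : R) : i != j -> ('X_i - c *: 'X_j : {mpoly R[n]}) != 0.
Proof.
move=> neq_ij; apply/eqP => /(congr1 (mcoeff U_(i))).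
rewrite mcoeffB mcoeffZ !mcoeffXU mcoeff0 eqxx eq_sym (negPf neq_ij) mulr0 subr0.
by move/eqP; rewrite oner_eq0.
Qed.

End MpolyFacts.

Section LaurentEvaluation.
Variables (F : numClosedFieldType) (n : nat) (p : {mpoly F[n]}) (d : nat).

Lemma eq_laurent_eval (v1 v2 : 'I_n -> F) :
  v1 =1 v2 -> laurent_eval p d v1 = laurent_eval p d v2.
Proof.
move=> ev; rewrite /laurent_eval (meval_eq p ev).
by congr (_ / _ ^+ _); apply: eq_bigr => i _; rewrite ev.
Qed.

Hypothesis p_sym : p \is symmetric.

Lemma laurent_eval_perm (s : 'S_n) (v : 'I_n -> F) :
  laurent_eval p d (fun i => v (s i)) = laurent_eval p d v.
Proof.
rewrite /laurent_eval meval_perm_sym //.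
by congr (_ / _ ^+ _); rewrite [RHS](reindex_inj (@perm_inj _ s)).
Qed.

End LaurentEvaluation.

Definition nondegenerate_mpoly (C : numClosedFieldType) (N : nat) (q t : C) : {mpoly C[N]} :=
  \prod_(i < N) ('X_i * \prod_(j < N | j != i)
     (('X_i - 1 *: 'X_j) * ('X_i - q *: 'X_j) * ('X_i - t^-1 *: 'X_j))).

Section Nondegenerate.
Variables (C : numClosedFieldType) (N : nat) (q t : C).

Lemma nondegenerate_mpoly_neq0 : nondegenerate_mpoly N q t != 0.
Proof.
apply/prodf_neq0 => i _; rewrite mulf_neq0 ?mpolyX_neq0 //.
by apply/prodf_neq0 => j neq_ji; rewrite !mulf_neq0 // mpolyX_subZ_neq0 // eq_sym.
Qed.

Lemma nondegenerate_mpolyP (x : 'I_N -> C) : (nondegenerate_mpoly N q t).@[x] != 0 ->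
  (forall i, x i != 0) /\
  (forall i j, i != j -> [/\ x i - x j != 0, x i - q * x j != 0 & x i - t^-1 * x j != 0]).
Proof.
rewrite rmorph_prod => /prodf_neq0 nondeg.
have {}nondeg i : x i * \prod_(j < N | j != i)
    ((x i - x j) * (x i - q * x j) * (x i - t^-1 * x j)) != 0.
  move: (nondeg i isT); rewrite rmorphM rmorph_prod /= mevalXU.
  by under eq_bigr => j _ do rewrite !rmorphM /= !mevalB !mevalZ !mevalXU mul1r.
split=> [i | i j neq_ij]; first by move: (nondeg i); rewrite mulf_eq0 negb_or => /andP[].
move: (nondeg i); rewrite mulf_eq0 negb_or => /andP[_ /prodf_neq0 /(_ j)].
by rewrite eq_sym neq_ij => /(_ isT); rewrite !mulf_eq0 !negb_or => /andP[/andP[-> ->] ->].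
Qed.

End Nondegenerate.

Section PhiPoints.
Variables (C : numClosedFieldType) (q t : C) (N : nat).
Implicit Types (m : 'I_N -> nat) (w : 'I_N -> C).

Lemma enum_setE (S : {set 'I_N}) : enum S = [seq r <- enum 'I_N | r \in S].
Proof. by rewrite enumT. Qed.

Lemma Phi_pts_indicator m w (S : {set 'I_N}) :
  (forall r, m r = (r \in S) :> nat) -> Phi_pts q m w = [seq w r | r <- enum S].
Proof.
move=> mE; rewrite /Phi_pts enum_setE; elim: (enum 'I_N) => //= r rs IH.
by rewrite mE; case: (r \in S); rewrite /= IH // expr0 invr1 mulr1.
Qed.

Lemma size_Phi_pts m w : size (Phi_pts q m w) = (\sum_(r < N) m r)%N.
Proof.
rewrite /Phi_pts size_flatten /shape -map_comp sumnE big_map big_enum /=.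
by apply: eq_bigr => r _; rewrite /= size_map size_iota.
Qed.

Lemma mem_Phi_pts m w r k : (k < m r)%N -> w r * q1 q ^- k \in Phi_pts q m w.
Proof.
move=> lt_km; apply/flatten_mapP; exists r; first by rewrite mem_enum.
by apply: map_f; rewrite mem_iota.
Qed.

Lemma Etilde_eq0 a (p : {mpoly C[a]}) d (L : seq C) (y : C) :
  size L = a -> y \in L -> y * (q1 q)^-1 \in L -> y * (q1 q)^-1 != y ->
  Etilde q t p d L = 0.
Proof.
move=> sizeL yL yqL neq_yq.
have lt_i : (index (y * (q1 q)^-1)%R L < a)%N by rewrite -sizeL index_mem.
have lt_j : (index y L < a)%N by rewrite -sizeL index_mem.
have neq_ji : Ordinal lt_j != Ordinal lt_i.
  rewrite -val_eqE /=; apply: contra neq_yq => /eqP eji.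
  by rewrite -{2}(nth_index 0 yL) eji nth_index.
rewrite /Etilde /= (bigD1 (Ordinal lt_i)) //= (bigD1 (Ordinal lt_j)) //= !nth_index //.
by rewrite [_ * y]mulrC subrr !(mul0r, mulr0).
Qed.

End PhiPoints.

Lemma EtildeE (C : numClosedFieldType) (q t : C) a (p : {mpoly C[a]}) d (L : seq C)
    (V : 'I_a -> C) (s : 'S_a) :
  p \is symmetric -> (forall i : 'I_a, nth 0 L i = V (s i)) ->
  Etilde q t p d L =
  q3 q t ^- (a * (a - 1) %/ 2) * ((q1 q)^-1 - 1) ^+ a *
  (\prod_(i < a) \prod_(j < a | j != i) (V i - (q1 q)^-1 * V j)) * laurent_eval p d V /
  (\prod_(i < a) \prod_(j < a | j != i) (V i - V j)).
Proof.
move=> p_sym LE; rewrite /Etilde /= (eq_laurent_eval _ _ LE) laurent_eval_perm //.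
rewrite -(prod_offdiag_perm (fun i j => V i - V j) s).
rewrite -(prod_offdiag_perm (fun i j => V i - (q1 q)^-1 * V j) s).
by congr (_ * _ * _ * _ / _); apply: eq_bigr => i _; apply: eq_bigr => j _; rewrite !LE.
Qed.

Definition mac_term (C : numClosedFieldType) (theta : C) (N a : nat)
    (P : ('I_a -> C) -> C) (x : 'I_N -> C) (s : 'S_N) : C :=
  P (fun i : 'I_a => nth 0 [seq x (s j) | j <- enum 'I_N] i) *
  \prod_(i < N | (i < a)%N) \prod_(j < N | (a <= j)%N)
    ((theta * x (s i) - theta^-1 * x (s j)) / (x (s i) - x (s j))).

Lemma AmacE (C : numClosedFieldType) (theta : C) (N a : nat) (P : ('I_a -> C) -> C) e x :
  Amac theta P e x = ((a`!)%:R * ((N - a)`!)%:R)^-1 *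
    \sum_(s : 'S_N) (if [forall j, e j == (if ((s^-1)%g j < a)%N then 1%Z else 0%Z)]
                    then mac_term theta P x s else 0).
Proof. by []. Qed.

Lemma big_indicator_mult (R : comPzSemiRingType) (N : nat) (S : {set 'I_N})
    (m : 'I_N -> nat) (P : pred 'I_N) (F : 'I_N -> nat -> R) :
  (forall r, m r = (r \in S) :> nat) ->
  \prod_(r < N | P r) \prod_(k < m r) F r k = \prod_(r in S | P r) F r 0%N.
Proof.
move=> mE; rewrite big_mkcond [RHS]big_mkcond; apply: eq_bigr => r _.
by rewrite mE; case: (r \in S); case: (P r); rewrite ?big_ord1 ?big_ord0.
Qed.

Section PermHeadProducts.
Variables (R : comPzSemiRingType) (N a : nat) (leq_aN : (a <= N)%N).
Variables (s : 'S_N) (S : {set 'I_N}).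
Hypothesis headE : perm_head a s = S.

Let g (i : 'I_a) : 'I_N := s (widen_ord leq_aN i).

Lemma mem_perm_head j : (j \in S) = ((s^-1)%g j < a)%N.
Proof. by rewrite -headE inE. Qed.

Lemma head_ord_inj : injective g.
Proof. by move=> i j /perm_inj /(congr1 val) /= eij; apply: val_inj. Qed.

Lemma head_ord_in i : g i \in S.
Proof. by rewrite mem_perm_head /g permK /=. Qed.

Lemma head_ord_onto j : j \in S -> exists i, g i = j.
Proof.
rewrite mem_perm_head => lt_ja; exists (Ordinal lt_ja).
by rewrite /g (_ : widen_ord _ _ = (s^-1)%g j) ?permKV //; apply: val_inj.
Qed.

Lemma big_perm_head (P : pred 'I_N) (F : 'I_N -> R) :
  \prod_(j in S | P j) F j = \prod_(i < a | P (g i)) F (g i).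
Proof.
rewrite (reindex_inj (@perm_inj _ s)) /= (eq_bigl (fun k => P (s k) && (k < a)%N)) => [|k].
  by rewrite (big_ord_narrow_cond leq_aN).
by rewrite mem_perm_head permK andbC.
Qed.

Lemma big_perm_tail (F : 'I_N -> R) :
  \prod_(k < N | (a <= k)%N) F (s k) = \prod_(j | j \notin S) F j.
Proof.
rewrite [RHS](reindex_inj (@perm_inj _ s)); apply: eq_bigl => k.
by rewrite mem_perm_head permK -leqNgt.
Qed.

End PermHeadProducts.

Definition indicator_exponent (N a : nat) (e : 'I_N -> int) : bool :=
  [exists S : {set 'I_N}, (#|S| == a) && [forall j, e j == ((j \in S) : nat)%:Z]].

Section CoefficientComputation.
Variables (C : numClosedFieldType) (q t qh q2h theta : C).
Hypotheses (q_neq0 : q != 0) (t_neq0 : t != 0) (q_neq1 : q != 1).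
Hypotheses (thetaE : theta ^+ 2 = t) (qhE : qh ^+ 2 = q) (q2hE : q2h ^+ 2 = q2 t).
Variables (N a : nat) (leq_aN : (a <= N)%N) (p : {mpoly C[a]}) (d : nat).
Hypothesis p_sym : p \is symmetric.
Variable x : 'I_N -> C.
Hypothesis x_neq0 : forall i, x i != 0.
Hypothesis x_generic : forall i j, i != j ->
  [/\ x i - x j != 0, x i - q * x j != 0 & x i - t^-1 * x j != 0].

Let w (r : 'I_N) := (x r)^-1 * qh^-1.

Let qh_neq0 : qh != 0. Proof. by move: q_neq0; rewrite -qhE expf_eq0. Qed.
Let q2h_neq0 : q2h != 0.
Proof. by move: t_neq0; rewrite -invr_eq0 -[t^-1]/(q2 t) -q2hE expf_eq0. Qed.
Let theta_neq0 : theta != 0. Proof. by move: t_neq0; rewrite -thetaE expf_eq0. Qed.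

Section Indicator.
Variables (S : {set 'I_N}) (s : 'S_N) (m : 'I_N -> nat).
Hypotheses (headE : perm_head a s = S) (mE : forall r, m r = (r \in S) :> nat).

Let g (i : 'I_a) : 'I_N := s (widen_ord leq_aN i).
Let W (i : 'I_a) : C := w (g i).
Let Yratio (z y : C) : C := (z - y * (q2 t)^-1) / (z - y).
Let cross (z y : C) : C := (theta * z - theta^-1 * y) / (z - y).

Let g_inj : injective g := @head_ord_inj _ _ leq_aN s.

Let g_generic i j : i != j -> [/\ x (g i) - x (g j) != 0, x (g i) - q * x (g j) != 0
  & x (g i) - t^-1 * x (g j) != 0].
Proof. by move=> neq_ij; apply: x_generic; rewrite (inj_eq g_inj). Qed.

Lemma prod_Yr_indicator :
  \prod_(r < N) \prod_(k < m r) Yr q t w r (w r * q1 q ^- k) =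
  (- (1 - (q1 q)^-1)^-1) ^+ a *
  (\prod_(i < a) \prod_(v | v \notin S) Yratio (W i) (w v) *
   \prod_(i < a) \prod_(j < a | j != i) Yratio (W i) (W j)).
Proof.
rewrite (big_indicator_mult _ (fun r k => Yr q t w r (w r * q1 q ^- k)) mE).
have -> : (- (1 - (q1 q)^-1)^-1) ^+ a = \prod_(i < a) - (1 - (q1 q)^-1)^-1.
  by rewrite prodr_const card_ord.
rewrite (big_perm_head _ headE) -!big_split.
apply: eq_bigr => i _; rewrite expr0 invr1 mulr1; congr (_ * _).
rewrite (bigID (fun v => v \in S)) /= mulrC; congr (_ * _).
  apply: eq_bigl => v; case: (boolP (v \in S)) => [|vNS]; rewrite ?andbF ?andbT //.
  by apply: contraNneq vNS => ->; apply: head_ord_in.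
rewrite (eq_bigl (fun v => (v \in S) && (v != g i))) => [|v]; last by rewrite andbC.
rewrite (big_perm_head _ headE); apply: eq_bigl => j.
by rewrite (inj_eq g_inj).
Qed.

Lemma prod_zeta_indicator :
  \prod_(r < N) \prod_(k1 < m r) \prod_(k2 < m r | (k1 < k2)%N)
    (zeta q t (w r * q1 q ^- k1) (w r * q1 q ^- k2))^-1 = 1.
Proof.
apply: big1 => r _; apply: big1 => k1 _; apply: big1 => k2 lt_k12.
have : (m r <= 1)%N by rewrite mE; case: (r \in S).
by move: (ltn_ord k2) lt_k12; lia.
Qed.

Lemma prod_phi_indicator :
  \prod_(r1 < N) \prod_(r2 < N | r1 != r2) \prod_(k1 < m r1) \prod_(k2 < m r2)
    (phi qh q2h (w r1 * q1 q ^- k1) (w r2 * q1 q ^- k2))^-1 =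
  \prod_(i < a) \prod_(j < a | j != i) (phi qh q2h (W i) (W j))^-1.
Proof.
pose G r1 k1 r2 k2 := (phi qh q2h (w r1 * q1 q ^- k1) (w r2 * q1 q ^- k2))^-1.
rewrite (eq_bigr (fun r1 => \prod_(k1 < m r1) \prod_(r2 < N | r1 != r2) \prod_(k2 < m r2)
  G r1 k1 r2 k2)) => [|r1 _]; last exact: exchange_big.
rewrite (big_indicator_mult _ (fun r1 k1 =>
  \prod_(r2 < N | r1 != r2) \prod_(k2 < m r2) G r1 k1 r2 k2) mE).
rewrite (big_perm_head _ headE); apply: eq_bigr => i _.
rewrite (big_indicator_mult _ (G (g i) 0%N) mE) (big_perm_head _ headE).
apply: eq_big => [j|j _]; first by rewrite eq_sym (inj_eq g_inj).
by rewrite /G !expr0 !invr1 !mulr1.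
Qed.

Lemma Etilde_indicator :
  Etilde q t p d (Phi_pts q m w) =
  q3 q t ^- (a * (a - 1) %/ 2) * ((q1 q)^-1 - 1) ^+ a *
  (\prod_(i < a) \prod_(j < a | j != i) (W i - (q1 q)^-1 * W j)) * laurent_eval p d W /
  (\prod_(i < a) \prod_(j < a | j != i) (W i - W j)).
Proof.
have size_S : size (enum S) = a by rewrite -cardE -headE card_perm_head.
pose h (i : 'I_a) := nth (g i) (enum S) i.
have hE (i : 'I_a) j0 : nth j0 (enum S) i = h i by apply: set_nth_default; rewrite size_S.
have h_inj : injective h.
  move=> i j; rewrite -(hE j (g i)) /h => /eqP.
  by rewrite nth_uniq ?size_S ?enum_uniq // => /eqP /val_inj.
have h_onto i : exists j, g j = h i.
  by apply: (head_ord_onto _ headE); rewrite -mem_enum mem_nth ?size_S.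
have [sigma hsigma] := perm_of_image h_inj h_onto.
apply: EtildeE => // i; rewrite (Phi_pts_indicator _ _ mE) (nth_map (g i)) ?size_S //.
by rewrite hE hsigma.
Qed.

Lemma mac_term_head :
  mac_term theta (Pg qh p d) x s =
  laurent_eval p d W * \prod_(i < a) \prod_(v | v \notin S) cross (x (g i)) (x v).
Proof.
rewrite /mac_term /Pg; congr (_ * _).
  apply: eq_laurent_eval => i; have lt_iN := leq_trans (ltn_ord i) leq_aN.
  rewrite (nth_map (g i)) ?size_enum_ord // mulrC; congr (_^-1 * _); congr (x (s _)).
  by apply: val_inj; rewrite /= nth_enum_ord.
rewrite -(big_ord_narrow (F := fun i => \prod_(v | v \notin S) cross (x (s i)) (x v)) leq_aN).
by apply: eq_bigr => i _; rewrite (big_perm_tail headE (fun v => cross (x (s i)) (x v))).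
Qed.

Lemma prod_Yratio_cross :
  \prod_(i < a) \prod_(v | v \notin S) Yratio (W i) (w v) =
  theta ^+ (a * (N - a)) * \prod_(i < a) \prod_(v | v \notin S) cross (x (g i)) (x v).
Proof.
have card_tail : #|[pred v | v \notin S]| = (N - a)%N.
  by rewrite -[N in RHS]card_ord -(cardsC S) -headE card_perm_head // addKn cardsE.
transitivity (\prod_(i < a) \prod_(v | v \notin S) (theta * cross (x (g i)) (x v))).
  apply: eq_bigr => i _; apply: eq_bigr => v vNS.
  have neq_gv : g i != v by apply: contraNneq vNS => <-; apply: head_ord_in.
  have [xgv _ _] := x_generic neq_gv.
  exact: (cross_factorE qh_neq0 (x_neq0 _) (x_neq0 _) xgv theta_neq0 thetaE).
under eq_bigr do rewrite prodrMl card_tail.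
by rewrite prodrMl card_ord -exprM mulnC.
Qed.

Lemma prod_pair_factors :
  \prod_(i < a) \prod_(j < a | j != i) Yratio (W i) (W j) *
  ((\prod_(i < a) \prod_(j < a | j != i) (W i - (q1 q)^-1 * W j)) /
   (\prod_(i < a) \prod_(j < a | j != i) (W i - W j))) *
  \prod_(i < a) \prod_(j < a | j != i) (phi qh q2h (W i) (W j))^-1 =
  q3 q t ^+ (a * (a - 1) %/ 2).
Proof.
pose kappa := qh * q2h * t / q.
have pairE i j : i != j ->
    Yratio (W i) (W j) * ((W i - (q1 q)^-1 * W j) / (W i - W j)) *
    (phi qh q2h (W i) (W j))^-1 = kappa.
  move=> neq_ij; have [xg xgq xgt] := g_generic neq_ij.
  exact: (pair_factorE qh_neq0 (x_neq0 _) (x_neq0 _) xg q2h_neq0 qhE q2hE xgq xgt).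
have kappa2 : kappa * kappa = q3 q t := pair_constant_sqr qh_neq0 q2h_neq0 qhE q2hE.
rewrite -prodf_div -!big_split /=.
under eq_bigr => i _ do rewrite -prodf_div -!big_split /=.
by apply: prod_offdiag_pairs => i j neq_ij; rewrite !pairE // eq_sym.
Qed.

Lemma Phi_coef_indicator :
  Phi_coef q t qh q2h (Etilde q t p d) m w =
  theta ^+ (a * (N - a)) * mac_term theta (Pg qh p d) x s.
Proof.
have q3_neq0 : q3 q t != 0 by rewrite mulf_neq0 ?invr_eq0.
have Yr_scale : - (1 - (q1 q)^-1)^-1 * ((q1 q)^-1 - 1) = 1.
  by rewrite mulNr -mulrN opprB mulVf // subr_eq0 eq_sym invr_eq1.
rewrite /Phi_coef prod_Yr_indicator prod_zeta_indicator prod_phi_indicator Etilde_indicator.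
rewrite mac_term_head prod_Yratio_cross; move: prod_pair_factors Yr_scale.
set Ain := \prod_(i < a) \prod_(j < a | j != i) Yratio (W i) (W j).
set En := \prod_(i < a) \prod_(j < a | j != i) (W i - (q1 q)^-1 * W j).
set Ed := \prod_(i < a) \prod_(j < a | j != i) (W i - W j).
set Ph := \prod_(i < a) \prod_(j < a | j != i) (phi qh q2h (W i) (W j))^-1.
set H := \prod_(i < a) \prod_(v | v \notin S) cross (x (g i)) (x v).
move=> pairs scale; set c := - (1 - (q1 q)^-1)^-1; set k := (q1 q)^-1 - 1.
transitivity ((c * k) ^+ a * (q3 q t ^- (a * (a - 1) %/ 2) * (Ain * (En / Ed) * Ph)) *
    (theta ^+ (a * (N - a)) * (laurent_eval p d W * H))).
  by rewrite [(c * k) ^+ a]exprMn; ring.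
by rewrite pairs scale expr1n mul1r mulVf ?expf_neq0 // mul1r.
Qed.

End Indicator.

Lemma Phi_coef_eq0 (m : 'I_N -> nat) (r : 'I_N) :
  (\sum_(r < N) m r)%N = a -> (1 < m r)%N ->
  Phi_coef q t qh q2h (Etilde q t p d) m w = 0.
Proof.
move=> sum_m gt1_mr; have w_neq0 : w r != 0 by rewrite mulf_neq0 ?invr_eq0.
rewrite /Phi_coef (@Etilde_eq0 _ _ _ _ _ _ _ (w r)) ?mulr0 ?mul0r ?size_Phi_pts //.
- by have := mem_Phi_pts q w (ltnW gt1_mr); rewrite expr0 invr1 mulr1.
- by have := mem_Phi_pts q w gt1_mr; rewrite expr1.
by rewrite -subr_eq0 -{2}[w r]mulr1 -mulrBr mulf_neq0 // subr_eq0 invr_eq1.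
Qed.

Lemma Amac_condE (e : 'I_N -> int) (S : {set 'I_N}) (s : 'S_N) :
  (forall j, e j = ((j \in S) : nat)%:Z) ->
  [forall j, e j == (if ((s^-1)%g j < a)%N then 1%Z else 0%Z)] = (perm_head a s == S).
Proof.
move=> eE; apply/forallP/eqP => [ej | headS j]; last by rewrite eE -headS inE; case: (_ < a)%N.
by apply/setP => j; move: (ej j); rewrite eE inE; case: (j \in S); case: (_ < a)%N.
Qed.

Lemma coef_indicator (e : 'I_N -> int) : indicator_exponent a e ->
  iotaAB qh (Phi q t qh q2h a (Etilde q t p d)) e x =
  opscale (theta ^+ (a * (N - a))) (Amac theta (Pg qh p d)) e x.
Proof.
case/existsP=> S /andP[/eqP cardS /forallP eE]; have {}eE j := eqP (eE j).
have [s0 head0] := perm_headP cardS.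
have mE r : `|- e r|%N = (r \in S) by rewrite eE; case: (r \in S).
have cond : [forall r, - e r <= 0] && (\sum_(r < N) `|- e r| == a)%N.
  apply/andP; split; first by apply/forallP => r; rewrite eE oppr_le0.
  by apply/eqP; rewrite (eq_bigr _ (fun r _ => mE r)) -cardS -sum1_card [RHS]big_mkcond.
rewrite /iotaAB /Phi /opscale AmacE cond (Phi_coef_indicator head0 mE); congr (_ * _).
rewrite (eq_bigr (fun s => if perm_head a s == S then mac_term theta (Pg qh p d) x s0 else 0)).
  rewrite -big_mkcond (eq_bigl (fun s => s \in [set s | perm_head a s == S])) => [|s].
    rewrite sumr_const (card_perm_head_fiber leq_aN cardS) -[mac_term _ _ _ _ *+ _]mulr_natr.
    by rewrite natrM mulrC mulfK // mulf_neq0 // pnatr_eq0 -lt0n fact_gt0.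
  by rewrite inE.
move=> s _; rewrite (Amac_condE _ eE); case: eqP => // headS.
apply: (mulfI (expf_neq0 (a * (N - a)) theta_neq0)).
by rewrite -(Phi_coef_indicator headS mE) (Phi_coef_indicator head0 mE).
Qed.

Lemma coef_not_indicator (e : 'I_N -> int) : ~~ indicator_exponent a e ->
  iotaAB qh (Phi q t qh q2h a (Etilde q t p d)) e x =
  opscale (theta ^+ (a * (N - a))) (Amac theta (Pg qh p d)) e x.
Proof.
move=> not_ind; rewrite /iotaAB /Phi /opscale AmacE [in RHS]big1 ?mulr0 => [|s _]; last first.
  case: ifP => // /forallP es; case/negP: not_ind; apply/existsP; exists (perm_head a s).
  rewrite card_perm_head // eqxx; apply/forallP => j.
  by rewrite inE; move/eqP: (es j) ->; case: (_ < a)%N.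
case: ifP => // /andP [/forallP e_le0 /eqP sum_e].
have eE r : e r = `|- e r|%N by rewrite abszN gez0_abs // -oppr_le0 e_le0.
have [/existsP [r gt1_r] | /existsPn le1] := boolP [exists r, (1 < `|- e r|)%N].
  exact: Phi_coef_eq0 gt1_r.
case/negP: not_ind; apply/existsP; exists [set r | `|- e r|%N == 1%N].
apply/andP; split.
  rewrite -sum_e -sum1_card big_mkcond /=; apply/eqP/eq_bigr => r _.
  by rewrite inE; move: (le1 r); case: `|- e r|%N => [|[|]].
apply/forallP => r; rewrite inE eE; move: (le1 r).
by case: `|- e r|%N => [|[|]].
Qed.

End CoefficientComputation.

Theorem proposition7p9 (C : numClosedFieldType) (q t qh q2h theta : C)
  (hq : q != 0) (ht : t != 0)
  (hq1 : forall n : nat, (0 < n)%N -> q1 q ^+ n != 1)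
  (hq2 : forall n : nat, (0 < n)%N -> q2 t ^+ n != 1)
  (hq3 : forall n : nat, (0 < n)%N -> q3 q t ^+ n != 1)
  (htheta : theta ^+ 2 = t) (hqh : qh ^+ 2 = q) (hq2h : q2h ^+ 2 = q2 t)
  (N : nat) (hN : (1 <= N)%N)
  (a : nat) (ha1 : (1 <= a)%N) (ha2 : (a <= N)%N)
  (p : {mpoly C[a]}) (d : nat) (hp : p \is symmetric) :
  op_eq
    (@iotaAB C qh N (@Phi C q t qh q2h N a (Etilde q t p d)))
    (opscale (theta ^+ (a * (N - a))) (@Amac C theta N a (Pg qh p d))).
Proof.
have q_neq1 : q != 1 by move: (hq1 1%N isT); rewrite expr1.
move=> e; exists (nondegenerate_mpoly N q t); split; first exact: nondegenerate_mpoly_neq0.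
move=> x /nondegenerate_mpolyP [x_neq0 x_generic].
by case: (boolP (indicator_exponent a e)) => ind_e;
  [apply: coef_indicator | apply: coef_not_indicator].
Qed.
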